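(* Let $q=2^m$, let $d>3$ be an odd integer and $f(x)=x^d$. Let $S_1,S_2\subset\mathbb{P}^3(\overline{\mathbb{F}}_q)$ (coordinates $(x:y:z:t)$) be defined by $P_f(x,y,z)=0$ and $P_f(x,y,t)=0$, let $X=S_1\cap S_2$, and let $H_7$ be the plane $x+y+z+t=0$. Then $X\cap H_7$ equals the curve $C_7:=S_2\cap H_7$.
   Context: For $f(x)=x^d$, $P_f(x,y,z)=\frac{x^d+y^d+z^d+(x+y+z)^d}{(x+y)(x+z)(y+z)}$, a homogeneous polynomial (exact division in characteristic 2). *)

From mathcomp Require Import all_boot all_order all_algebra.
From mathcomp Require Import mpoly.
Set Implicit Arguments. Unset Strict Implicit. Unset Printing Implicit Defensive.
Import GRing.Theory.
Local Open Scope ring_scope.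

Definition vX (F : fieldType) : {mpoly F[3]} := 'X_(0 : 'I_3).
Definition vY (F : fieldType) : {mpoly F[3]} := 'X_(1 : 'I_3).
Definition vZ (F : fieldType) : {mpoly F[3]} := 'X_(2 : 'I_3).

Definition Pnum (F : fieldType) (d : nat) : {mpoly F[3]} :=
  vX F ^+ d + vY F ^+ d + vZ F ^+ d + (vX F + vY F + vZ F) ^+ d.

Definition Pden (F : fieldType) : {mpoly F[3]} :=
  (vX F + vY F) * (vX F + vZ F) * (vY F + vZ F).

(* Q is P_f: the exact quotient Pnum / Pden (unique, since {mpoly F[3]} is a
   domain and Pden <> 0). *)
Definition is_Pf (F : fieldType) (d : nat) (Q : {mpoly F[3]}) : Prop :=
  Pden F * Q = Pnum F d.

Definition ev3 (F : fieldType) (Q : {mpoly F[3]}) (a b c : F) : F :=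
  Q.@[fun i : 'I_3 => [:: a; b; c]`_i].

From mathcomp Require Import all_boot all_order all_algebra.
From mathcomp Require Import mpoly.
Import GRing.Theory.
Local Open Scope ring_scope.

(* In characteristic 2 the substitution z |-> x + y + z is an involution that
   fixes x, y and permutes x + y + z with z, x + z with y + z; hence it fixes
   both the numerator and the denominator of P_f, and so P_f itself.  On the
   plane H7 we have t = x + y + z, so P_f(x,y,t) = P_f(x,y,z) there, i.e. the
   condition defining S1 is implied by the one defining S2. *)

Lemma mpolyX_add_neq0 (R : comNzRingType) (n : nat) (i j : 'I_n) :
  i != j -> 'X_i + 'X_j != 0 :> {mpoly R[n]}.
Proof.
move=> neq_ij; apply/eqP => /(congr1 (meval (fun k => (k == i)%:R))).
by rewrite mevalD !mevalXU eqxx eq_sym (negbTE neq_ij) addr0 meval0 => /eqP;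
  rewrite oner_eq0.
Qed.

Section ShiftInvariance.
Context {F : fieldType} (F_pchar2 : 2%N \in [pchar F]).

Let mpoly_pchar2 : 2%N \in [pchar {mpoly F[3]}] :=
  rmorph_pchar (@mpolyC 3 F) F_pchar2.

Definition shiftZ : 3.-tuple {mpoly F[3]} :=
  [tuple vX F; vY F; vX F + vY F + vZ F].

Lemma shiftZ_Pnum (d : nat) : Pnum F d \mPo shiftZ = Pnum F d.
Proof.
rewrite /Pnum /vX /vY /vZ !(rmorphD, rmorphXn) /= !comp_mpolyXU /=.
by rewrite /vX /vY /vZ addKr_pchar2 // [LHS]addrAC.
Qed.

Lemma shiftZ_Pden : Pden F \mPo shiftZ = Pden F.
Proof.
rewrite /Pden /vX /vY /vZ !(rmorphD, rmorphM) /= !comp_mpolyXU /=.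
by rewrite /vX /vY /vZ -!addrA addKr_pchar2 // addrCA addKr_pchar2 // mulrAC.
Qed.

Lemma Pden_neq0 : Pden F != 0.
Proof. by rewrite /Pden !mulf_neq0 // mpolyX_add_neq0. Qed.

Lemma shiftZ_Pf {d : nat} {Q : {mpoly F[3]}} : is_Pf d Q -> Q \mPo shiftZ = Q.
Proof.
move=> hQ; apply: (mulfI Pden_neq0).
by rewrite -{1}shiftZ_Pden -rmorphM /= hQ shiftZ_Pnum.
Qed.

Lemma ev3_Pf_shiftZ {d : nat} {Q : {mpoly F[3]}} (x y z : F) :
  is_Pf d Q -> ev3 Q x y (x + y + z) = ev3 Q x y z.
Proof.
move=> hQ; rewrite /ev3 -{2}(shiftZ_Pf hQ) comp_mpoly_meval.
apply: meval_eq => -[[|[|[|i]]] lti] //=;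
  by rewrite (tnth_nth 0) /vX /vY /vZ /= ?mevalD !mevalXU /=.
Qed.

End ShiftInvariance.

Theorem proposition3p2 (F : closedFieldType) (m d : nat)
  (hchar : 2%N \in [pchar F]) (hm : (0 < m)%N)
  (hodd : odd d) (hd : (3 < d)%N)
  (Q : {mpoly F[3]}) (hQ : is_Pf d Q) :
  forall x y z t : F, [|| x != 0, y != 0, z != 0 | t != 0] ->
    ((ev3 Q x y z = 0 /\ ev3 Q x y t = 0) /\ x + y + z + t = 0)
    <-> (ev3 Q x y t = 0 /\ x + y + z + t = 0).
Proof.
move=> x y z t _; split; first by case=> [[_ ->] ->].
case=> Qt0 onH7; do !split=> //.
have t_sum : t = x + y + z by rewrite -[t](addKr_pchar2 hchar (x + y + z)) onH7 addr0.
by rewrite t_sum (ev3_Pf_shiftZ hchar x y z hQ) in Qt0.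
Qed.
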